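(* The assignments $L\mapsto\operatorname{Spec}L$ and $X\mapsto L_{\mathrm{open}}(X)$ form an adjoint pair of contravariant functors between the category of ideal lattices and the category of spectral spaces: for every ideal lattice $L$ and spectral space $X$ there are mutually inverse natural bijections between morphisms of ideal lattices $L\to L_{\mathrm{open}}(X)$ and continuous maps $X\to\operatorname{Spec}L$, given by $\phi\mapsto\big(x\mapsto\bigvee\{c \text{ compact}\mid x\notin\phi(c)\}\big)$ and $f\mapsto\big(a\mapsto f^{-1}(D(a))\big)$. Moreover, $L_{\mathrm{open}}$ is fully faithful, and an ideal lattice $L$ is isomorphic to one of the form $L_{\mathrm{open}}(X)$ if and only if every element of $L$ is semi-prime.
   Context: An ideal lattice is a poset $(L,\leq)$ with an associative multiplication such that: (L1) $L$ is a complete lattice; (L2) every element is a supremum of compact elements ($a$ is compact if $a\leq\sup A$ implies $a\leq\sup A'$ for some finite $A'\subseteq A$); (L3) multiplication distributes over binary joins on both sides; (L4) $1=\sup L$ is compact and is a two-sided identity; (L5) products of compact elements are compact. A morphism of ideal lattices $\phi\colon L\to L'$ is a map preserving arbitrary suprema, with $\phi(1)=1$ and $\phi(ab)=\phi(a)\phi(b)$. Prime: $p\neq1$ with $ab\leq p\Rightarrow a\leq p$ or $b\leq p$; semi-prime: $bb\leq a\Rightarrow b\leq a$. $\operatorname{Spec}L$: set of primes with closed sets $V(a)=\{p\mid a\leq p\}$, opens $D(a)=\{p\mid a\not\leq p\}$; a morphism $\phi\colon L\to L'$ induces the continuous map $\operatorname{Spec}L'\to\operatorname{Spec}L$, $p\mapsto\sup\{a\mid\phi(a)\leq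 p\}$. $L_{\mathrm{open}}(X)$ is the lattice of open subsets of $X$ with multiplication $U\cap V$; a continuous map $f$ induces $U\mapsto f^{-1}(U)$. A spectral space is a $T_0$, quasi-compact space whose quasi-compact open subsets are closed under finite intersections and form an open basis, and in which every non-empty irreducible closed subset has a generic point. *)

From Stdlib Require Import List Classical.
Import ListNotations.

Record latdata := LatData {
  lcar : Type;
  lle : lcar -> lcar -> Prop;
  lmul : lcar -> lcar -> lcar;
  lsup : (lcar -> Prop) -> lcar }.

Arguments lle {L} : rename.
Arguments lmul {L} : rename.
Arguments lsup {L} : rename.

Definition ltop (L : latdata) : lcar L := lsup (fun _ => True).
Definition ljoin {L : latdata} (a b : lcar L) : lcar L :=
  lsup (fun x => x = a \/ x = b).

Definition compact (L : latdata) (a : lcar L) : Prop :=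
  forall A : lcar L -> Prop, lle a (lsup A) ->
    exists l : list (lcar L), (forall x, In x l -> A x) /\
       lle a (lsup (fun x => In x l)).

Record ideal_lattice (L : latdata) : Prop := {
  il_refl : forall a : lcar L, lle a a;
  il_trans : forall a b c : lcar L, lle a b -> lle b c -> lle a c;
  il_antisym : forall a b : lcar L, lle a b -> lle b a -> a = b;
  il_sup_ub : forall (A : lcar L -> Prop) a, A a -> lle a (lsup A);
  il_sup_least : forall (A : lcar L -> Prop) b,
      (forall a, A a -> lle a b) -> lle (lsup A) b;
  il_assoc : forall a b c : lcar L, lmul a (lmul b c) = lmul (lmul a b) c;
  il_algebraic : forall a : lcar L,
      exists A : lcar L -> Prop, (forall c, A c -> compact L c) /\ a = lsup A;
  il_distl : forall a b c : lcar L, lmul a (ljoin b c) = ljoin (lmul a b) (lmul a c);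
  il_distr : forall a b c : lcar L, lmul (ljoin a b) c = ljoin (lmul a c) (lmul b c);
  il_top_compact : compact L (ltop L);
  il_mul1l : forall a : lcar L, lmul (ltop L) a = a;
  il_mul1r : forall a : lcar L, lmul a (ltop L) = a;
  il_mul_compact : forall a b : lcar L, compact L a -> compact L b -> compact L (lmul a b) }.

Definition is_hom (L L' : latdata) (phi : lcar L -> lcar L') : Prop :=
  (forall A : lcar L -> Prop,
      phi (lsup A) = lsup (fun y => exists x, A x /\ y = phi x)) /\
  phi (ltop L) = ltop L' /\
  (forall a b, phi (lmul a b) = lmul (phi a) (phi b)).

Definition prime (L : latdata) (p : lcar L) : Prop :=
  p <> ltop L /\ forall a b, lle (lmul a b) p -> lle a p \/ lle b p.

Definition semiprime (L : latdata) (a : lcar L) : Prop :=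
  forall b, lle (lmul b b) a -> lle b a.

Record top := Top {
  pt : Type;
  opn : (pt -> Prop) -> Prop;
  opn_full : opn (fun _ => True);
  opn_inter : forall U V, opn U -> opn V -> opn (fun x => U x /\ V x);
  opn_union : forall F : (pt -> Prop) -> Prop, (forall U, F U -> opn U) ->
      opn (fun x => exists U, F U /\ U x) }.

Arguments opn {t} : rename.

Definition continuous (X Y : top) (f : pt X -> pt Y) : Prop :=
  forall V : pt Y -> Prop, opn V -> opn (fun x => V (f x)).

Definition closed (X : top) (C : pt X -> Prop) : Prop := opn (fun x => ~ C x).

Definition closure (X : top) (S : pt X -> Prop) : pt X -> Prop :=
  fun y => forall C, closed X C -> (forall x, S x -> C x) -> C y.

Definition qcompact (X : top) (K : pt X -> Prop) : Prop :=
  forall F : (pt X -> Prop) -> Prop, (forall U, F U -> opn U) ->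
    (forall x, K x -> exists U, F U /\ U x) ->
    exists l : list (pt X -> Prop), (forall U, In U l -> F U) /\
      (forall x, K x -> exists U, In U l /\ U x).

Definition irreducible (X : top) (C : pt X -> Prop) : Prop :=
  forall C1 C2, closed X C1 -> closed X C2 ->
    (forall x, C x <-> C1 x \/ C2 x) ->
    (forall x, C x <-> C1 x) \/ (forall x, C x <-> C2 x).

Definition spectral (X : top) : Prop :=
  (forall x y : pt X, x <> y -> exists U, opn U /\ ~ (U x <-> U y)) /\
  qcompact X (fun _ => True) /\
  (forall U V : pt X -> Prop, opn U -> qcompact X U -> opn V -> qcompact X V ->
      qcompact X (fun x => U x /\ V x)) /\
  (forall (U : pt X -> Prop) x, opn U -> U x ->
      exists V, opn V /\ qcompact X V /\ V x /\ forall y, V y -> U y) /\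
  (forall C : pt X -> Prop, closed X C -> (exists x, C x) -> irreducible X C ->
      exists x, forall y, C y <-> closure X (fun z => z = x) y).

Definition opens (X : top) := {U : pt X -> Prop | opn U}.
Definition oset {X : top} (U : opens X) : pt X -> Prop := proj1_sig U.

Definition opens_inter {X : top} (U V : opens X) : opens X :=
  exist _ (fun x => oset U x /\ oset V x) (opn_inter X _ _ (proj2_sig U) (proj2_sig V)).

Lemma opens_union_open (X : top) (A : opens X -> Prop) :
  opn (fun x => exists W, (exists U, A U /\ W = oset U) /\ W x).
Proof.
  apply opn_union. intros W [U [_ ->]]. exact (proj2_sig U).
Qed.

Definition opens_union {X : top} (A : opens X -> Prop) : opens X :=
  exist _ _ (opens_union_open X A).

Definition Lopen (X : top) : latdata :=
  LatData (opens X) (fun U V => forall x, oset U x -> oset V x)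
          opens_inter opens_union.

Definition lopen_map {X Y : top} (g : pt X -> pt Y) (Hg : continuous X Y g)
  (V : opens Y) : opens X :=
  exist _ (fun x => oset V (g x)) (Hg _ (proj2_sig V)).

Definition primes (L : latdata) := {p : lcar L | prime L p}.

Definition Dset (L : latdata) (a : lcar L) : primes L -> Prop :=
  fun p => ~ lle a (proj1_sig p).

Definition spec_open (L : latdata) (S : primes L -> Prop) : Prop :=
  exists a, forall p, S p <-> Dset L a p.

Section SpecTop.
Variables (L : latdata) (HL : ideal_lattice L).

Lemma join_top (b : lcar L) : ljoin b (ltop L) = ltop L.
Proof.
  apply (il_antisym _ HL).
  - apply (il_sup_least _ HL). intros x _. apply (il_sup_ub _ HL). exact I.
  - apply (il_sup_ub _ HL). right; reflexivity.
Qed.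

Lemma mul_le_l (a b : lcar L) : lle (lmul a b) a.
Proof.
  pose proof (il_distl _ HL a b (ltop L)) as E.
  rewrite join_top, (il_mul1r _ HL) in E.
  assert (H : lle (lmul a b) (ljoin (lmul a b) a)) by
    (apply (il_sup_ub _ HL); left; reflexivity).
  rewrite <- E in H. exact H.
Qed.

Lemma mul_le_r (a b : lcar L) : lle (lmul a b) b.
Proof.
  pose proof (il_distr _ HL a (ltop L) b) as E.
  rewrite join_top, (il_mul1l _ HL) in E.
  assert (H : lle (lmul a b) (ljoin (lmul a b) b)) by
    (apply (il_sup_ub _ HL); left; reflexivity).
  rewrite <- E in H. exact H.
Qed.

Lemma spec_full : spec_open L (fun _ => True).
Proof.
  exists (ltop L). intros [p [Hne Hp]]; unfold Dset; simpl; split; [|auto].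
  intros _ Hle. apply Hne. apply (il_antisym _ HL); [|exact Hle].
  apply (il_sup_ub _ HL). exact I.
Qed.

Lemma spec_inter (U V : primes L -> Prop) :
  spec_open L U -> spec_open L V -> spec_open L (fun x => U x /\ V x).
Proof.
  intros [a Ha] [b Hb]. exists (lmul a b). intros p. split.
  - intros [Up Vp] Hab. apply Ha in Up. apply Hb in Vp.
    pose proof (proj2 (proj2_sig p) a b Hab) as Hor.
    unfold Dset in *. destruct Hor; contradiction.
  - intros Hn. split; [apply Ha | apply Hb]; intro H; apply Hn;
      eapply (il_trans _ HL); [apply mul_le_l | exact H | apply mul_le_r | exact H].
Qed.

Lemma spec_union (F : (primes L -> Prop) -> Prop) :
  (forall U, F U -> spec_open L U) -> spec_open L (fun x => exists U, F U /\ U x).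
Proof.
  intros HF.
  exists (lsup (fun a => exists U, F U /\ forall p, U p <-> Dset L a p)).
  intros p. split.
  - intros [U [FU Up]] Hle. destruct (HF U FU) as [a Ha].
    apply (proj1 (Ha p) Up). eapply (il_trans _ HL); [|exact Hle].
    apply (il_sup_ub _ HL). exists U; split; assumption.
  - intros Hn. apply NNPP; intro Hno. apply Hn. apply (il_sup_least _ HL).
    intros a [U [FU Ha]]. apply NNPP; intro Hna. apply Hno.
    exists U; split; [exact FU | apply Ha; exact Hna].
Qed.

End SpecTop.

Definition Spec (L : latdata) (HL : ideal_lattice L) : top :=
  Top (primes L) (spec_open L) (spec_full L HL) (spec_inter L HL) (spec_union L HL).

Definition spec_map {L' L : latdata} (psi : lcar L' -> lcar L) (p : lcar L) : lcar L' :=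
  lsup (fun a => lle (psi a) p).

Definition phi_of {L : latdata} {X : top} (phi : lcar L -> pt X -> Prop) (x : pt X)
  : lcar L := lsup (fun c => compact L c /\ ~ phi c x).

Definition psi_of {L : latdata} {X : top} (f : pt X -> lcar L) (a : lcar L)
  : pt X -> Prop := fun x => ~ lle a (f x).

(* Everything is read through D(a) = {p prime | a </= p}: a |-> D(a) preserves joins,
   products and 1, and the quasi-compact opens of Spec L are exactly the D(c), c compact.
   The one non-formal input is prime separation: if c is compact and no power of c lies
   below a, Zorn's lemma gives a prime above a avoiding all powers of c.  It makes D(c)
   quasi-compact and makes a |-> D(a) injective on semi-prime elements.  A morphism
   phi : L -> L_open(X) is determined by its values on compact elements, which is why
   x |-> sup {c | x notin phi(c)} is a prime whose D-sets pull back to phi.  Fullness of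
   L_open uses generic points: given phi : L_open(Y) -> L_open(X), the complement of the
   largest open V with x notin phi(V) is irreducible, and its generic point is f(x). *)

From Stdlib Require Import RelationClasses List Classical ClassicalEpsilon
  FunctionalExtensionality PropExtensionality ProofIrrelevance Lia.

Lemma list_choice {A B : Type} (R : A -> B -> Prop) (l : list A) :
  (forall x, In x l -> exists y, R x y) ->
  exists l' : list B, (forall y, In y l' -> exists x, In x l /\ R x y) /\
                      (forall x, In x l -> exists y, In y l' /\ R x y).
Proof.
  induction l as [|a l IH]; intros H.
  - exists nil. split; intros _ [].
  - destruct (H a (or_introl eq_refl)) as [b Hb].
    destruct IH as [l' [H1 H2]]; [intros x Hx; apply H; right; exact Hx|].
    exists (b :: l'). split.
    + intros y [<- | Hy]; [exists a; simpl; auto|].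
      destruct (H1 y Hy) as [x [? ?]]. exists x. simpl; auto.
    + intros x [<- | Hx]; [exists b; simpl; auto|].
      destruct (H2 x Hx) as [y [? ?]]. exists y. simpl; auto.
Qed.

Lemma pred_ext {A : Type} (P Q : A -> Prop) : (forall x, P x <-> Q x) -> P = Q.
Proof.
  intros H. apply functional_extensionality. intros x. apply propositional_extensionality, H.
Qed.

Lemma sig_ext {A : Type} {P : A -> Prop} (x y : {a | P a}) : proj1_sig x = proj1_sig y -> x = y.
Proof. destruct x, y; simpl; intros ->. f_equal. apply proof_irrelevance. Qed.

Lemma opn_ext (X : top) (U V : pt X -> Prop) : (forall x, U x <-> V x) -> opn U -> opn V.
Proof. intros H. rewrite (pred_ext U V H). exact id. Qed.

Definition closed_compl {X : top} {C : pt X -> Prop} (HC : closed X C) : opens X :=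
  exist _ (fun z => ~ C z) HC.

Lemma qcompact_ext (X : top) (K K' : pt X -> Prop) :
  (forall x, K x <-> K' x) -> qcompact X K -> qcompact X K'.
Proof. intros H. rewrite (pred_ext K K' H). exact id. Qed.

Section IdealLattice.
Context {L : latdata} (HL : ideal_lattice L).

Lemma lle_refl (a : lcar L) : lle a a.
Proof. exact (il_refl _ HL a). Qed.

Lemma lle_trans (a b c : lcar L) : lle a b -> lle b c -> lle a c.
Proof. exact (il_trans _ HL a b c). Qed.

#[local] Instance lle_transitive : Transitive (@lle L) := lle_trans.

Lemma lle_antisym (a b : lcar L) : lle a b -> lle b a -> a = b.
Proof. exact (il_antisym _ HL a b). Qed.

Lemma lsup_ub (A : lcar L -> Prop) (a : lcar L) : A a -> lle a (lsup A).
Proof. exact (il_sup_ub _ HL A a). Qed.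

Lemma lsup_least (A : lcar L -> Prop) (b : lcar L) :
  (forall a, A a -> lle a b) -> lle (lsup A) b.
Proof. exact (il_sup_least _ HL A b). Qed.

Lemma lle_ext (u v : lcar L) : (forall a, lle a u <-> lle a v) -> u = v.
Proof.
  intros H. apply lle_antisym; [apply H | apply <- H]; apply lle_refl.
Qed.

Lemma lsup_mono (A B : lcar L -> Prop) :
  (forall x, A x -> exists y, B y /\ lle x y) -> lle (lsup A) (lsup B).
Proof.
  intros H. apply lsup_least. intros a Aa. destruct (H a Aa) as [y [By Hy]].
  rewrite Hy. apply lsup_ub, By.
Qed.

Lemma lle_ltop (a : lcar L) : lle a (ltop L).
Proof. apply lsup_ub; exact I. Qed.

Lemma ljoin_l (a b : lcar L) : lle a (ljoin a b).
Proof. apply lsup_ub; auto. Qed.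

Lemma ljoin_r (a b : lcar L) : lle b (ljoin a b).
Proof. apply lsup_ub; auto. Qed.

Lemma ljoin_least (a b c : lcar L) : lle a c -> lle b c -> lle (ljoin a b) c.
Proof. intros Ha Hb. apply lsup_least. intros x [-> | ->]; assumption. Qed.

Lemma ljoin_idPr (a b : lcar L) : lle a b -> ljoin a b = b.
Proof.
  intros H. apply lle_antisym; [apply ljoin_least, lle_refl | apply ljoin_r]; exact H.
Qed.

Lemma lmul_mono_r (a b b' : lcar L) : lle b b' -> lle (lmul a b) (lmul a b').
Proof. intros H. rewrite <- (ljoin_idPr b b' H), (il_distl _ HL). apply ljoin_l. Qed.

Lemma lmul_mono_l (a a' b : lcar L) : lle a a' -> lle (lmul a b) (lmul a' b).
Proof. intros H. rewrite <- (ljoin_idPr a a' H), (il_distr _ HL). apply ljoin_l. Qed.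

Lemma lmul_mono (a a' b b' : lcar L) :
  lle a a' -> lle b b' -> lle (lmul a b) (lmul a' b').
Proof. intros Ha Hb. rewrite (lmul_mono_l a a' b Ha). apply lmul_mono_r, Hb. Qed.

Lemma lmul_ljoin_le (m x y : lcar L) :
  lle (lmul (ljoin m x) (ljoin m y)) (ljoin m (lmul x y)).
Proof.
  rewrite (il_distr _ HL), (il_distl _ HL x).
  repeat apply ljoin_least; [| | apply ljoin_r].
  - rewrite (mul_le_l L HL). apply ljoin_l.
  - rewrite (mul_le_r L HL). apply ljoin_l.
Qed.

Lemma prime_not_ltop (p : lcar L) : prime L p -> ~ lle (ltop L) p.
Proof. intros [Hne _] H. apply Hne, lle_antisym; [apply lle_ltop | exact H]. Qed.

Fixpoint lpow (c : lcar L) (n : nat) : lcar L :=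
  match n with 0 => ltop L | S n => lmul c (lpow c n) end.

Lemma lpow1 (c : lcar L) : lpow c 1 = c.
Proof. apply (il_mul1r _ HL). Qed.

Lemma lpowD (c : lcar L) (i j : nat) : lpow c (i + j) = lmul (lpow c i) (lpow c j).
Proof.
  induction i as [|i IH]; simpl.
  - symmetry. apply (il_mul1l _ HL).
  - rewrite IH. apply (il_assoc _ HL).
Qed.

Lemma lpow_compact (c : lcar L) (n : nat) : compact L c -> compact L (lpow c n).
Proof.
  intros Hc. induction n as [|n IH]; simpl.
  - apply (il_top_compact _ HL).
  - apply (il_mul_compact _ HL); assumption.
Qed.

Lemma prime_lpow_le (c p : lcar L) (n : nat) : prime L p -> lle (lpow c n) p -> lle c p.
Proof.
  intros Hp. induction n as [|n IH]; simpl; intros H.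
  - exfalso. exact (prime_not_ltop p Hp H).
  - destruct (proj2 Hp _ _ H); auto.
Qed.

(* c^(n+2) <= b gives c^(n+1) * c^(n+1) <= b, so semiprimality lowers the exponent. *)
Lemma semiprime_lpow_le (b c : lcar L) (n : nat) : semiprime L b -> lle (lpow c n) b -> lle c b.
Proof.
  intros Hb. assert (Hsucc : forall m, lle (lpow c (S m)) b -> lle c b).
  { induction m as [|m IH]; intros H.
    - rewrite lpow1 in H. exact H.
    - apply IH, Hb. rewrite <- lpowD, <- H.
      replace (S m + S m) with (S (S m) + m) by lia. rewrite lpowD. apply (mul_le_l L HL). }
  destruct n as [|n]; intros H; [|exact (Hsucc n H)].
  rewrite <- H. apply lle_ltop.
Qed.

Definition chain (C : lcar L -> Prop) : Prop :=
  forall x y, C x -> C y -> lle x y \/ lle y x.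

Lemma chain_list_ub (C : lcar L -> Prop) (l : list (lcar L)) :
  chain C -> (exists d, C d) -> (forall x, In x l -> C x) ->
  exists z, C z /\ forall x, In x l -> lle x z.
Proof.
  intros HC [d Cd]. induction l as [|a l IH]; intros Hl.
  - exists d. split; [exact Cd | intros x []].
  - destruct IH as [z [Cz Hz]]; [intros x Hx; apply Hl; right; exact Hx|].
    destruct (HC a z (Hl a (or_introl eq_refl)) Cz) as [Haz | Hza].
    + exists z. split; [exact Cz|]. intros x [<- | Hx]; auto.
    + exists a. split; [apply Hl; left; reflexivity|].
      intros x [<- | Hx]; [apply lle_refl | rewrite (Hz x Hx); exact Hza].
Qed.

Lemma compact_le_chain_sup (C : lcar L -> Prop) (c : lcar L) :
  compact L c -> chain C -> (exists d, C d) -> lle c (lsup C) ->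
  exists z, C z /\ lle c z.
Proof.
  intros Hc HC Hne H. destruct (Hc C H) as [l [Hl Hle]].
  destruct (chain_list_ub C l HC Hne Hl) as [z [Cz Hz]].
  exists z. split; [exact Cz|]. rewrite Hle. apply lsup_least, Hz.
Qed.

(* Zorn's lemma by the Bourbaki-Witt argument: the least set containing a0 and closed
   under an inflationary f and under sups of chains is itself a chain, so its
   supremum is a fixed point of f. *)
Section Tower.
Variables (a0 : lcar L) (f : lcar L -> lcar L).

Inductive tower : lcar L -> Prop :=
| tower_step : forall x, tower x -> tower (f x)
| tower_sup : forall C, (forall x, C x -> tower x) -> chain C ->
    tower (lsup (fun x => x = a0 \/ C x)).

Hypothesis f_inflationary : forall x, tower x -> lle x (f x).

Lemma tower_ge (x : lcar L) : tower x -> lle a0 x.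
Proof.
  induction 1 as [x Tx IH | C _ _ _]; [rewrite IH; apply f_inflationary, Tx|].
  apply lsup_ub. left. reflexivity.
Qed.

Definition tower_extreme (x : lcar L) : Prop :=
  forall y, tower y -> lle y x -> y <> x -> lle (f y) x.

Lemma tower_extreme_cmp (x : lcar L) : tower x -> tower_extreme x ->
  forall y, tower y -> lle y x \/ lle (f x) y.
Proof.
  intros Tx Ex y Ty. induction Ty as [z Tz IH | C HC IH _].
  - destruct IH as [H | H].
    + destruct (classic (z = x)) as [-> | Hne]; [right; apply lle_refl | left; apply Ex; auto].
    + right. rewrite H. apply f_inflationary, Tz.
  - destruct (classic (exists c, C c /\ lle (f x) c)) as [[c [Cc Hc]] | Hn].
    + right. rewrite Hc. apply lsup_ub. right. exact Cc.
    + left. apply lsup_least. intros w [-> | Cw]; [apply tower_ge, Tx|].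
      destruct (IH w Cw) as [H | H]; [exact H|]. exfalso. eauto.
Qed.

Lemma tower_extreme_all (x : lcar L) : tower x -> tower_extreme x.
Proof.
  intros Tx. induction Tx as [z Tz IH | C HC IH HCc]; intros y Ty Hyx Hne.
  - destruct (tower_extreme_cmp z Tz IH y Ty) as [H | H].
    + destruct (classic (y = z)) as [-> | Hyz]; [apply lle_refl|].
      rewrite (IH y Ty H Hyz). apply f_inflationary, Tz.
    + exfalso. apply Hne, lle_antisym; assumption.
  - assert (Hsup_ub : forall c, C c -> lle c (lsup (fun x => x = a0 \/ C x)))
      by (intros c Cc; apply lsup_ub; right; exact Cc).
    destruct (classic (exists c, C c /\ lle y c)) as [[c [Cc Hyc]] | Hn].
    + destruct (classic (y = c)) as [-> | Hyc'].
      * destruct (classic (exists c', C c' /\ lle (f c) c')) as [[c' [Cc' H]] | Hn'].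
        -- rewrite H. apply Hsup_ub, Cc'.
        -- exfalso. apply Hne, lle_antisym; [exact Hyx|]. apply lsup_least.
           intros w [-> | Cw]; [apply tower_ge, HC, Cc|].
           destruct (tower_extreme_cmp c (HC c Cc) (IH c Cc) w (HC w Cw)) as [H | H];
             [exact H | exfalso; eauto].
      * rewrite (IH c Cc y Ty Hyc Hyc'). apply Hsup_ub, Cc.
    + exfalso. apply Hne, lle_antisym; [exact Hyx|]. apply lsup_least.
      intros w [-> | Cw]; [apply tower_ge, Ty|].
      destruct (tower_extreme_cmp w (HC w Cw) (IH w Cw) y Ty) as [H | H];
        [exfalso; eauto | rewrite <- H; apply f_inflationary, HC, Cw].
Qed.

Lemma tower_chain : chain tower.
Proof.
  intros x y Tx Ty.
  destruct (tower_extreme_cmp x Tx (tower_extreme_all x Tx) y Ty) as [H | H]; [right; exact H|].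
  left. rewrite <- H. apply f_inflationary, Tx.
Qed.

End Tower.

Lemma zorn_above (P : lcar L -> Prop) (a0 : lcar L) :
  P a0 ->
  (forall C, (forall x, C x -> P x) -> chain C -> (exists x, C x) -> P (lsup C)) ->
  exists m, P m /\ lle a0 m /\ forall y, P y -> lle m y -> m = y.
Proof.
  intros Pa0 Pchain. apply NNPP; intros Hno.
  assert (Hnext : forall x, exists y,
             P x /\ lle a0 x -> P y /\ lle a0 y /\ lle x y /\ x <> y).
  { intros x. destruct (classic (P x /\ lle a0 x)) as [Hx | Hx]; [|exists x; tauto].
    apply NNPP; intros Hy. apply Hno. exists x. split; [tauto|]. split; [tauto|].
    intros y Py Hxy. apply NNPP; intros Hne. apply Hy. exists y. intros _.
    repeat split; auto. rewrite <- Hxy. apply Hx. }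
  set (f := fun x => proj1_sig (constructive_indefinite_description _ (Hnext x))).
  assert (Hf : forall x, P x /\ lle a0 x -> P (f x) /\ lle a0 (f x) /\ lle x (f x) /\ x <> f x)
    by (intros x; exact (proj2_sig (constructive_indefinite_description _ (Hnext x)))).
  assert (Htower : forall x, tower a0 f x -> P x /\ lle a0 x).
  { induction 1 as [x _ IH | C _ IH HC].
    - apply Hf in IH. tauto.
    - split; [|apply lsup_ub; left; reflexivity]. apply Pchain.
      + intros w [-> | Cw]; [exact Pa0 | apply IH, Cw].
      + intros x y [-> | Cx] [-> | Cy]; auto using lle_refl.
        * left. apply IH, Cy.
        * right. apply IH, Cx.
      + exists a0. left. reflexivity. }
  assert (Hinfl : forall x, tower a0 f x -> lle x (f x)) by (intros x Tx; apply Hf, Htower, Tx).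
  set (m := lsup (fun x => x = a0 \/ tower a0 f x)).
  assert (Tm : tower a0 f m) by (apply tower_sup; [auto | apply tower_chain, Hinfl]).
  destruct (Hf m (Htower m Tm)) as [_ [_ [_ Hne]]].
  apply Hne, lle_antisym; [apply Hinfl, Tm|]. apply lsup_ub. right. apply tower_step, Tm.
Qed.

Definition avoids_powers (c x : lcar L) : Prop := forall n, ~ lle (lpow c n) x.

Lemma maximal_avoids_powers_prime (c m : lcar L) :
  avoids_powers c m -> (forall y, avoids_powers c y -> lle m y -> m = y) -> prime L m.
Proof.
  intros Hm Hmax. split.
  - intros E. apply (Hm 0). rewrite E. apply lle_refl.
  - intros x y Hxy. apply NNPP; intros Hn. apply not_or_and in Hn as [Hx Hy].
    assert (Hjoin : forall z, ~ lle z m -> exists i, lle (lpow c i) (ljoin m z)).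
    { intros z Hz. apply NNPP; intros H. apply Hz.
      rewrite (Hmax (ljoin m z)); [apply ljoin_r | | apply ljoin_l].
      intros n Hn'. apply H. exists n. exact Hn'. }
    destruct (Hjoin x Hx) as [i Hi], (Hjoin y Hy) as [j Hj].
    apply (Hm (i + j)). rewrite lpowD, (lmul_mono _ _ _ _ Hi Hj), lmul_ljoin_le.
    apply ljoin_least; [apply lle_refl | exact Hxy].
Qed.

Lemma prime_avoiding_powers (a c : lcar L) :
  compact L c -> avoids_powers c a ->
  exists p, prime L p /\ lle a p /\ avoids_powers c p.
Proof.
  intros Hc Ha.
  destruct (zorn_above (avoids_powers c) a Ha) as [m [Hm [Ham Hmax]]].
  - intros C HC Hch Hne n Hn.
    destruct (compact_le_chain_sup C _ (lpow_compact c n Hc) Hch Hne Hn) as [z [Cz Hz]].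
    exact (HC z Cz n Hz).
  - exists m. split; [|split; assumption]. apply (maximal_avoids_powers_prime c); assumption.
Qed.

Lemma lsup_list_compact (l : list (lcar L)) :
  (forall x, In x l -> compact L x) -> compact L (lsup (fun x => In x l)).
Proof.
  assert (Hsub : forall l1 l2 : list (lcar L), (forall x, In x l1 -> In x l2) ->
             lle (lsup (fun x => In x l1)) (lsup (fun x => In x l2))).
  { intros l1 l2 H. apply lsup_mono. intros x Hx. exists x. split; [auto | apply lle_refl]. }
  induction l as [|a l IH]; intros Hl A HA.
  - exists nil. split; [intros _ [] | apply lle_refl].
  - destruct (Hl a (or_introl eq_refl) A) as [la [Hla Ha]].
    { rewrite <- HA. apply lsup_ub. left. reflexivity. }
    destruct (IH (fun x H => Hl x (or_intror H)) A) as [l' [Hl' Hle]].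
    { rewrite <- HA. apply Hsub. right. assumption. }
    exists (la ++ l'). split.
    + intros x Hx. apply in_app_or in Hx as [? | ?]; auto.
    + apply lsup_least. intros x [<- | Hx].
      * rewrite Ha. apply Hsub. intros y Hy. apply in_or_app. auto.
      * rewrite <- (Hsub l' (la ++ l')), <- Hle; [apply lsup_ub, Hx|].
        intros y Hy. apply in_or_app. auto.
Qed.

Definition Vset (a : lcar L) : primes L -> Prop := fun p => lle a (proj1_sig p).

Lemma Dset_open (a : lcar L) : spec_open L (Dset L a).
Proof. exists a. intros p. reflexivity. Qed.

Lemma Dset_lsup (A : lcar L -> Prop) (p : primes L) :
  Dset L (lsup A) p <-> exists a, A a /\ Dset L a p.
Proof.
  split.
  - intros H. apply NNPP; intros Hn. apply H, lsup_least. intros a Aa.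
    apply NNPP; intros Ha. apply Hn. exists a. split; assumption.
  - intros [a [Aa Ha]] H. apply Ha. rewrite <- H. apply lsup_ub, Aa.
Qed.

Lemma Dset_lmul (a b : lcar L) (p : primes L) :
  Dset L (lmul a b) p <-> Dset L a p /\ Dset L b p.
Proof.
  split.
  - intros H. split; intros H'; apply H; rewrite <- H';
      [apply (mul_le_l L HL) | apply (mul_le_r L HL)].
  - intros [Ha Hb] H. destruct (proj2 (proj2_sig p) a b H); contradiction.
Qed.

Lemma Dset_ltop (p : primes L) : Dset L (ltop L) p.
Proof. apply prime_not_ltop, (proj2_sig p). Qed.

Lemma Dset_mono (a b : lcar L) (p : primes L) : lle a b -> Dset L a p -> Dset L b p.
Proof. intros Hab Ha Hb. apply Ha. rewrite Hab. exact Hb. Qed.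

Lemma Dset_lpow (c : lcar L) (n : nat) (p : primes L) : Dset L c p -> Dset L (lpow c n) p.
Proof. intros Hc H. apply Hc, (prime_lpow_le c _ n (proj2_sig p) H). Qed.

Lemma Dset_compact (a : lcar L) (p : primes L) :
  Dset L a p -> exists c, compact L c /\ lle c a /\ Dset L c p.
Proof.
  destruct (il_algebraic _ HL a) as [B [HB EB]]. rewrite EB at 1. intros Hp.
  apply Dset_lsup in Hp as [c [Bc Hc]]. exists c.
  split; [apply HB, Bc|]. split; [rewrite EB; apply lsup_ub, Bc | exact Hc].
Qed.

(* A finite subcover is found below a power of c: if no power of c lies below the
   join of the cover, a prime separates them and is left uncovered. *)
Lemma Dset_qcompact (c : lcar L) : compact L c -> qcompact (Spec L HL) (Dset L c).
Proof.
  intros Hc F HF Hcov.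
  set (A := fun a => exists U, F U /\ forall p, U p <-> Dset L a p).
  assert (Hpow : exists n, lle (lpow c n) (lsup A)).
  { apply NNPP; intros H.
    destruct (prime_avoiding_powers (lsup A) c Hc) as [p [Hp [HAp Hcp]]].
    { intros n Hn. apply H. exists n. exact Hn. }
    destruct (Hcov (exist _ p Hp)) as [U [FU Up]].
    { intros H'. apply (Hcp 1). rewrite lpow1. exact H'. }
    destruct (HF U FU) as [a Ha]. apply (proj1 (Ha _) Up). simpl.
    rewrite <- HAp. apply lsup_ub. exists U. split; assumption. }
  destruct Hpow as [n Hn]. destruct (lpow_compact c n Hc A Hn) as [l [Hl Hle]].
  destruct (list_choice (fun a U => F U /\ forall p, U p <-> Dset L a p) l) as [lU [H1 H2]].
  { intros a Ha. apply Hl, Ha. }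
  exists lU. split.
  - intros U HU. destruct (H1 U HU) as [x [_ [FU _]]]. exact FU.
  - intros p Hp. apply (Dset_lpow c n), (Dset_mono _ _ _ Hle), Dset_lsup in Hp as [a [Ha Hap]].
    destruct (H2 a Ha) as [U [HU [_ HUa]]]. exists U. split; [exact HU | apply HUa, Hap].
Qed.

Lemma spec_qcompact_open (U : primes L -> Prop) :
  spec_open L U -> qcompact (Spec L HL) U ->
  exists c, compact L c /\ forall p, U p <-> Dset L c p.
Proof.
  intros [a Ha] Hq.
  set (F := fun W : primes L -> Prop =>
              exists c, compact L c /\ lle c a /\ forall p, W p <-> Dset L c p).
  destruct (Hq F) as [lW [HW1 HW2]].
  - intros W [c [_ [_ Hc]]]. exists c. exact Hc.
  - intros p Up. apply Ha, Dset_compact in Up as [c [Hc [Hca Hcp]]].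
    exists (Dset L c). split; [|exact Hcp].
    exists c. split; [exact Hc|]. split; [exact Hca | reflexivity].
  - destruct (list_choice (fun W c => compact L c /\ lle c a /\ forall p, W p <-> Dset L c p) lW)
      as [lc [H1 H2]]; [intros W HW; apply HW1, HW|].
    exists (lsup (fun x => In x lc)). split.
    + apply lsup_list_compact. intros c Hc. destruct (H1 c Hc) as [_ [_ [? _]]]. assumption.
    + intros p. split.
      * intros Up. destruct (HW2 p Up) as [W [InW Wp]].
        destruct (H2 W InW) as [c [Inc [_ [_ Hc]]]].
        apply Dset_lsup. exists c. split; [exact Inc | apply Hc, Wp].
      * intros Dp. apply Ha. refine (Dset_mono _ _ _ _ Dp). apply lsup_least.
        intros c Hc. destruct (H1 c Hc) as [_ [_ [_ [? _]]]]. assumption.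
Qed.

Lemma spec_closed_Vset (C : primes L -> Prop) :
  closed (Spec L HL) C -> exists a, forall p, C p <-> Vset a p.
Proof.
  intros [a Ha]. exists a. intros p. specialize (Ha p). unfold Dset in Ha. unfold Vset.
  split; intros H; apply NNPP; intros H'; apply Ha in H'; contradiction.
Qed.

Lemma Vset_closed (a : lcar L) : closed (Spec L HL) (Vset a).
Proof. exists a. intros p. reflexivity. Qed.

Lemma spec_closure_point (q y : primes L) :
  closure (Spec L HL) (fun z => z = q) y <-> Vset (proj1_sig q) y.
Proof.
  split.
  - intros Hy. apply (Hy (Vset (proj1_sig q))); [apply Vset_closed|].
    intros z ->. apply lle_refl.
  - intros Hqy C HC HCq. destruct (spec_closed_Vset C HC) as [a Ha].
    apply Ha. unfold Vset. rewrite <- Hqy. apply Ha, HCq. reflexivity.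
Qed.

Definition lrad (a : lcar L) : lcar L := lsup (fun b => forall p, Vset a p -> Vset b p).

Lemma Vset_lrad (a : lcar L) (p : primes L) : Vset (lrad a) p <-> Vset a p.
Proof.
  split; intros H.
  - unfold Vset. rewrite <- H. apply lsup_ub. auto.
  - apply lsup_least. intros b Hb. exact (Hb p H).
Qed.

Lemma lrad_prime (a : lcar L) :
  (exists p, Vset a p) -> irreducible (Spec L HL) (Vset a) -> prime L (lrad a).
Proof.
  intros [p0 Hp0] Hirr. split.
  - intros E. apply (Dset_ltop p0). rewrite <- E. apply Vset_lrad, Hp0.
  - intros b c Hbc.
    assert (Hsplit : forall p, Vset a p <-> Vset (ljoin a b) p \/ Vset (ljoin a c) p).
    { intros p. split.
      - intros Hp. assert (Hr := proj2 (Vset_lrad a p) Hp). unfold Vset in Hp, Hr.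
        destruct (proj2 (proj2_sig p) b c (lle_trans _ _ _ Hbc Hr)); [left | right];
          apply ljoin_least; assumption.
      - intros [H | H]; unfold Vset; rewrite <- H; apply ljoin_l. }
    destruct (Hirr _ _ (Vset_closed _) (Vset_closed _) Hsplit) as [E | E]; [left | right];
      apply lsup_ub; intros p Hp; apply E in Hp; unfold Vset; rewrite <- Hp; apply ljoin_r.
Qed.

Lemma spec_T0 (p q : primes L) : p <> q -> exists U, spec_open L U /\ ~ (U p <-> U q).
Proof.
  intros Hpq.
  destruct (classic (lle (proj1_sig p) (proj1_sig q))) as [Hpq' | Hpq'].
  - destruct (classic (lle (proj1_sig q) (proj1_sig p))) as [Hqp | Hqp].
    + exfalso. apply Hpq, sig_ext, lle_antisym; assumption.
    + exists (Dset L (proj1_sig q)). split; [apply Dset_open|].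
      unfold Dset. intros [H _]. exact (H Hqp (lle_refl _)).
  - exists (Dset L (proj1_sig p)). split; [apply Dset_open|].
    unfold Dset. intros [_ H]. exact (H Hpq' (lle_refl _)).
Qed.

Lemma spec_generic_point (C : primes L -> Prop) :
  closed (Spec L HL) C -> (exists p, C p) -> irreducible (Spec L HL) C ->
  exists q, forall p, C p <-> closure (Spec L HL) (fun z => z = q) p.
Proof.
  intros HC Hne Hirr. destruct (spec_closed_Vset C HC) as [a Ha].
  assert (HV : irreducible (Spec L HL) (Vset a)).
  { intros C1 C2 H1 H2 E. setoid_rewrite <- Ha. apply Hirr; [exact H1 | exact H2|].
    intros x. rewrite Ha. apply E. }
  assert (Hq : prime L (lrad a)).
  { apply lrad_prime, HV. destruct Hne as [p Hp]. exists p. apply Ha, Hp. }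
  exists (exist _ (lrad a) Hq). intros y. rewrite Ha, spec_closure_point. simpl.
  symmetry. apply Vset_lrad.
Qed.

Lemma spec_spectral : spectral (Spec L HL).
Proof.
  split; [exact spec_T0|]. split.
  { refine (qcompact_ext _ _ _ _ (Dset_qcompact _ (il_top_compact _ HL))).
    intros p. split; [trivial | intros _; apply Dset_ltop]. }
  split.
  { intros U V HU QU HV QV.
    destruct (spec_qcompact_open U HU QU) as [c [Hc Ec]].
    destruct (spec_qcompact_open V HV QV) as [d [Hd Ed]].
    refine (qcompact_ext _ _ _ _ (Dset_qcompact _ (il_mul_compact _ HL c d Hc Hd))).
    intros p. rewrite Dset_lmul, Ec, Ed. reflexivity. }
  split.
  { intros U p [a Ha] Up. apply Ha, Dset_compact in Up as [c [Hc [Hca Hcp]]].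
    exists (Dset L c). split; [apply Dset_open|]. split; [apply Dset_qcompact, Hc|].
    split; [exact Hcp|]. intros q Hq. apply Ha. exact (Dset_mono _ _ _ Hca Hq). }
  exact spec_generic_point.
Qed.

End IdealLattice.

Section OpenLattice.
Variable X : top.

Lemma opens_ext (U V : opens X) : (forall x, oset U x <-> oset V x) -> U = V.
Proof. intros H. apply sig_ext, pred_ext, H. Qed.

Lemma oset_lsup (A : opens X -> Prop) (x : pt X) :
  oset (@lsup (Lopen X) A) x <-> exists U, A U /\ oset U x.
Proof.
  split.
  - intros [W [[U [AU ->]] Wx]]. exists U. split; assumption.
  - intros [U [AU Ux]]. exists (oset U). split; [exists U; split|]; auto.
Qed.

Lemma oset_ljoin (U V : opens X) (x : pt X) :
  oset (@ljoin (Lopen X) U V) x <-> oset U x \/ oset V x.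
Proof.
  unfold ljoin. rewrite oset_lsup. split.
  - intros [W [[-> | ->] Wx]]; auto.
  - intros [H | H]; [exists U | exists V]; split; auto.
Qed.

Lemma oset_lmul (U V : opens X) (x : pt X) :
  oset (@lmul (Lopen X) U V) x <-> oset U x /\ oset V x.
Proof. reflexivity. Qed.

Lemma oset_ltop (x : pt X) : oset (ltop (Lopen X)) x.
Proof. apply oset_lsup. exists (exist _ _ (opn_full X)). split; exact I. Qed.

Lemma qcompact_compact (V : opens X) : qcompact X (oset V) -> compact (Lopen X) V.
Proof.
  intros Hq A HA.
  destruct (Hq (fun W => exists U, A U /\ W = oset U)) as [lW [H1 H2]].
  - intros W [U [_ ->]]. exact (proj2_sig U).
  - intros x Vx. apply HA, oset_lsup in Vx as [U [AU Ux]]. exists (oset U). eauto.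
  - destruct (list_choice (fun W U => A U /\ W = oset U) lW) as [lU [G1 G2]];
      [intros W HW; apply H1, HW|].
    exists lU. split.
    + intros U HU. destruct (G1 U HU) as [_ [_ [AU _]]]. exact AU.
    + intros x Vx. apply oset_lsup. destruct (H2 x Vx) as [W [HW Wx]].
      destruct (G2 W HW) as [U [HU [_ ->]]]. eauto.
Qed.

Lemma compact_qcompact (V : opens X) : compact (Lopen X) V -> qcompact X (oset V).
Proof.
  intros Hc F HF Hcov.
  destruct (Hc (fun U : opens X => F (oset U))) as [l [H1 H2]].
  - intros x Vx. apply oset_lsup. destruct (Hcov x Vx) as [U [FU Ux]].
    exists (exist _ U (HF U FU)). split; assumption.
  - exists (map oset l). split.
    + intros U HU. apply in_map_iff in HU as [W [<- HW]]. apply H1, HW.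
    + intros x Vx. apply H2, oset_lsup in Vx as [U [HU Ux]].
      exists (oset U). split; [apply in_map, HU | exact Ux].
Qed.

Lemma Lopen_ideal_lattice : spectral X -> ideal_lattice (Lopen X).
Proof.
  intros [_ [Hqc [Hinter [Hbasis _]]]].
  constructor; try (intros; apply opens_ext; intros x;
                    rewrite ?oset_lmul, ?oset_ljoin, ?oset_lmul; pose proof (oset_ltop x); tauto).
  - intros U x Ux. exact Ux.
  - intros U V W HUV HVW x Ux. apply HVW, HUV, Ux.
  - intros U V HUV HVU. apply opens_ext. intros x. split; [apply HUV | apply HVU].
  - intros A U AU x Ux. apply oset_lsup. eauto.
  - intros A U H x Hx. apply oset_lsup in Hx as [V [AV Vx]]. exact (H V AV x Vx).
  - intros U. exists (fun V : opens X => compact (Lopen X) V /\ forall x, oset V x -> oset U x).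
    split; [intros c [Hc _]; exact Hc|].
    apply opens_ext. intros x. rewrite oset_lsup. split.
    + intros Ux. destruct (Hbasis (oset U) x (proj2_sig U) Ux) as [V [HV [QV [Vx HVU]]]].
      exists (exist _ V HV). split; [split; [apply qcompact_compact, QV | exact HVU] | exact Vx].
    + intros [V [[_ HV] Vx]]. apply HV, Vx.
  - apply qcompact_compact. refine (qcompact_ext _ _ _ _ Hqc). intros x.
    split; [intros _; apply oset_ltop | trivial].
  - intros U V HU HV. apply qcompact_compact.
    exact (Hinter _ _ (proj2_sig U) (compact_qcompact U HU) (proj2_sig V) (compact_qcompact V HV)).
Qed.

End OpenLattice.

Lemma hom_mono {L L' : latdata} (HL : ideal_lattice L) (HL' : ideal_lattice L')
  (psi : lcar L -> lcar L') : is_hom L L' psi -> forall a b, lle a b -> lle (psi a) (psi b).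
Proof.
  intros [Hsup _] a b Hab. rewrite <- (ljoin_idPr HL a b Hab). unfold ljoin. rewrite Hsup.
  apply (lsup_ub HL'). exists a. auto.
Qed.

Lemma hom_comp {L1 L2 L3 : latdata} (f : lcar L1 -> lcar L2) (g : lcar L2 -> lcar L3) :
  is_hom L1 L2 f -> is_hom L2 L3 g -> is_hom L1 L3 (fun a => g (f a)).
Proof.
  intros [Fs [Ft Fm]] [Gs [Gt Gm]]. split; [|split].
  - intros A. rewrite Fs, Gs. f_equal. apply pred_ext. intros z. split.
    + intros [y [[x [Ax ->]] ->]]. eauto.
    + intros [x [Ax ->]]. eauto.
  - rewrite Ft. exact Gt.
  - intros a b. rewrite Fm, Gm. reflexivity.
Qed.

Lemma hom_inverse {L L' : latdata} (phi : lcar L -> lcar L') (psi : lcar L' -> lcar L) :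
  is_hom L L' phi -> (forall a, psi (phi a) = a) -> (forall u, phi (psi u) = u) ->
  is_hom L' L psi.
Proof.
  intros [Hs [Ht Hm]] H1 H2.
  assert (Hinj : forall a b, phi a = phi b -> a = b).
  { intros a b E. rewrite <- (H1 a), <- (H1 b), E. reflexivity. }
  split; [|split].
  - intros A. apply Hinj. rewrite H2, Hs. f_equal. apply pred_ext. intros z. split.
    + intros Az. exists (psi z). rewrite H2. split; [exists z; auto | reflexivity].
    + intros [y [[x [Ax ->]] ->]]. rewrite H2. exact Ax.
  - rewrite <- Ht, H1. reflexivity.
  - intros a b. apply Hinj. rewrite Hm, !H2. reflexivity.
Qed.

Lemma lopen_map_hom (X Y : top) (g : pt X -> pt Y) (Hg : continuous X Y g) :
  is_hom (Lopen Y) (Lopen X) (lopen_map g Hg).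
Proof.
  split; [|split].
  - intros A. apply opens_ext. intros x. rewrite oset_lsup.
    change (oset (lopen_map g Hg (@lsup (Lopen Y) A)) x) with (oset (@lsup (Lopen Y) A) (g x)).
    rewrite oset_lsup. split.
    + intros [U [AU Ux]]. exists (lopen_map g Hg U). split; [exists U; auto | exact Ux].
    + intros [U [[V [AV ->]] Ux]]. exists V. auto.
  - apply opens_ext. intros x. simpl. pose proof (oset_ltop X x). pose proof (oset_ltop Y (g x)).
    tauto.
  - intros U V. apply opens_ext. intros x. reflexivity.
Qed.

Section SpecMap.
Context {L L' : latdata} (HL : ideal_lattice L) (HL' : ideal_lattice L')
  (psi : lcar L' -> lcar L) (Hpsi : is_hom L' L psi).

Lemma spec_map_galois (p : lcar L) (a : lcar L') : lle (psi a) p <-> lle a (spec_map psi p).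
Proof.
  split; intros H; [apply (lsup_ub HL'), H|].
  apply (lle_trans HL _ _ _ (hom_mono HL' HL psi Hpsi _ _ H)).
  unfold spec_map. rewrite (proj1 Hpsi). apply (lsup_least HL). intros y [x [Hx ->]]. exact Hx.
Qed.

Lemma spec_map_prime (p : lcar L) : prime L p -> prime L' (spec_map psi p).
Proof.
  intros Hp. split.
  - intros E. apply (prime_not_ltop HL p Hp). rewrite <- (proj1 (proj2 Hpsi)).
    apply spec_map_galois. rewrite E. apply (lle_refl HL').
  - intros a b Hab. apply spec_map_galois in Hab. rewrite (proj2 (proj2 Hpsi)) in Hab.
    destruct (proj2 Hp _ _ Hab); [left | right]; apply spec_map_galois; assumption.
Qed.

Lemma spec_map_continuous : continuous (Spec L HL) (Spec L' HL')
  (fun p => exist _ (spec_map psi (proj1_sig p)) (spec_map_prime _ (proj2_sig p))).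
Proof.
  intros V [a Ha]. exists (psi a). intros p. rewrite Ha. unfold Dset. simpl.
  rewrite spec_map_galois. reflexivity.
Qed.

End SpecMap.

Lemma spec_map_id {L : latdata} (HL : ideal_lattice L) (p : lcar L) :
  spec_map (fun a : lcar L => a) p = p.
Proof.
  apply (lle_antisym HL); [apply (lsup_least HL); auto | apply (lsup_ub HL), (lle_refl HL)].
Qed.

Lemma spec_map_comp {L1 L2 L3 : latdata} (H1 : ideal_lattice L1) (H2 : ideal_lattice L2)
  (H3 : ideal_lattice L3) (psi1 : lcar L1 -> lcar L2) (psi2 : lcar L2 -> lcar L3) :
  is_hom L1 L2 psi1 -> is_hom L2 L3 psi2 -> forall p,
  spec_map (fun a => psi2 (psi1 a)) p = spec_map psi1 (spec_map psi2 p).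
Proof.
  intros K1 K2 p. apply (lle_ext H1). intros a.
  rewrite <- (spec_map_galois H3 H1 _ (hom_comp _ _ K1 K2)), <- (spec_map_galois H2 H1 _ K1).
  apply (spec_map_galois H3 H2 _ K2).
Qed.

Section Adjunction.
Context {L : latdata} (HL : ideal_lattice L) (X : top) (HX : spectral X).

#[local] Instance lle_transitive_L : Transitive (@lle L) := lle_trans HL.

Section FromMorphism.
Variables (phi : lcar L -> lcar (Lopen X)) (Hphi : is_hom L (Lopen X) phi).

Lemma compact_le_phi_of (c : lcar L) (x : pt X) :
  compact L c -> lle c (phi_of (fun b => oset (phi b)) x) <-> ~ oset (phi c) x.
Proof.
  intros Hc. split; [|intros H; apply (lsup_ub HL); split; assumption].
  intros H Hx. destruct (Hc _ H) as [l [Hl Hle]].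
  apply (hom_mono HL (Lopen_ideal_lattice X HX) phi Hphi _ _ Hle) in Hx.
  rewrite (proj1 Hphi) in Hx. apply oset_lsup in Hx as [U [[y [Hy ->]] Hx]].
  exact (proj2 (Hl y Hy) Hx).
Qed.

Lemma le_phi_of (a : lcar L) (x : pt X) :
  lle a (phi_of (fun b => oset (phi b)) x) <-> ~ oset (phi a) x.
Proof.
  destruct (il_algebraic _ HL a) as [B [HB ->]]. rewrite (proj1 Hphi), oset_lsup. split.
  - intros H [U [[y [By ->]] Hx]]. apply (compact_le_phi_of y x (HB y By)); [|exact Hx].
    rewrite <- H. apply (lsup_ub HL), By.
  - intros H. apply (lsup_least HL). intros y By. apply compact_le_phi_of; [apply HB, By|].
    intros Hy. apply H. exists (phi y). split; [exists y; auto | exact Hy].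
Qed.

Lemma phi_of_prime (x : pt X) : prime L (phi_of (fun a => oset (phi a)) x).
Proof.
  split.
  - intros E. apply (le_phi_of (ltop L) x); [rewrite E; apply (lle_refl HL)|].
    rewrite (proj1 (proj2 Hphi)). apply oset_ltop.
  - intros a b Hab. rewrite !le_phi_of in *. rewrite (proj2 (proj2 Hphi)), oset_lmul in Hab.
    apply NNPP. intros Hn. apply Hab. split; apply NNPP; intros H; apply Hn; auto.
Qed.

Lemma phi_of_continuous (H : forall x, prime L (phi_of (fun a => oset (phi a)) x)) :
  continuous X (Spec L HL) (fun x => exist _ _ (H x)).
Proof.
  intros V [a Ha]. refine (opn_ext X (oset (phi a)) _ _ (proj2_sig (phi a))).
  intros x. rewrite Ha. unfold Dset. simpl. rewrite le_phi_of. split; [auto | apply NNPP].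
Qed.

Lemma psi_of_phi_of (a : lcar L) : psi_of (phi_of (fun b => oset (phi b))) a = oset (phi a).
Proof.
  apply pred_ext. intros x. unfold psi_of. rewrite le_phi_of. split; [apply NNPP | auto].
Qed.

End FromMorphism.

Section FromContinuous.
Variables (f : pt X -> pt (Spec L HL)).

Lemma psi_of_open : continuous X (Spec L HL) f ->
  forall a, opn (psi_of (fun x => proj1_sig (f x)) a).
Proof. intros Hf a. exact (Hf (Dset L a) (Dset_open a)). Qed.

Lemma psi_of_hom (H : forall a, opn (psi_of (fun x => proj1_sig (f x)) a)) :
  is_hom L (Lopen X) (fun a => exist _ _ (H a)).
Proof.
  split; [|split].
  - intros A. apply opens_ext. intros x. rewrite oset_lsup. simpl.
    transitivity (Dset L (lsup A) (f x)); [reflexivity|]. rewrite (Dset_lsup HL). split.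
    + intros [a [Aa Da]]. eexists. split; [exists a; split; [exact Aa | reflexivity] | exact Da].
    + intros [U [[a [Aa ->]] Ux]]. exists a. split; assumption.
  - apply opens_ext. intros x. simpl. pose proof (Dset_ltop HL (f x)). pose proof (oset_ltop X x).
    tauto.
  - intros a b. apply opens_ext. intros x. apply (Dset_lmul HL).
Qed.

Lemma phi_of_psi_of (x : pt X) :
  phi_of (psi_of (fun y => proj1_sig (f y))) x = proj1_sig (f x).
Proof.
  unfold phi_of, psi_of. destruct (il_algebraic _ HL (proj1_sig (f x))) as [B [HB EB]].
  apply (lle_antisym HL).
  - apply (lsup_least HL). intros c [_ Hc]. apply NNPP, Hc.
  - rewrite EB at 1. apply (lsup_least HL). intros c Bc. apply (lsup_ub HL). split; [apply HB, Bc|].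
    intros Hn. apply Hn. rewrite EB. apply (lsup_ub HL), Bc.
Qed.

End FromContinuous.

End Adjunction.

Lemma phi_of_natural {L L' : latdata} (HL : ideal_lattice L) (HL' : ideal_lattice L')
  (X : top) (HX : spectral X) (psi : lcar L' -> lcar L)
  (phi : lcar L -> lcar (Lopen X)) :
  is_hom L' L psi -> is_hom L (Lopen X) phi ->
  forall x, phi_of (fun a' => oset (phi (psi a'))) x
            = spec_map psi (phi_of (fun a => oset (phi a)) x).
Proof.
  intros Hpsi Hphi x. apply (lle_ext HL'). intros a.
  rewrite <- (spec_map_galois HL HL' psi Hpsi), (le_phi_of HL X HX phi Hphi).
  exact (le_phi_of HL' X HX _ (hom_comp _ _ Hpsi Hphi) a x).
Qed.

Lemma lopen_map_faithful (X Y : top) (HY : spectral Y) (f g : pt X -> pt Y)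
  (Hf : continuous X Y f) (Hg : continuous X Y g) :
  (forall V, lopen_map f Hf V = lopen_map g Hg V) -> forall x, f x = g x.
Proof.
  intros H x. apply NNPP. intros Hne. destruct (proj1 HY _ _ Hne) as [U [HU Hn]]. apply Hn.
  pose proof (f_equal (fun V => oset V x) (H (exist _ U HU))) as E. simpl in E.
  rewrite E. reflexivity.
Qed.

(* The point of Y attached to x is the generic point of the complement of the largest
   open set whose image under phi misses x. *)
Section Fullness.
Variables (X Y : top) (HX : spectral X) (HY : spectral Y)
  (phi : lcar (Lopen Y) -> lcar (Lopen X)) (Hphi : is_hom (Lopen Y) (Lopen X) phi).

Definition missing_open (x : pt X) : opens Y := @lsup (Lopen Y) (fun V => ~ oset (phi V) x).

Lemma le_missing_open (x : pt X) (V : opens Y) :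
  @lle (Lopen Y) V (missing_open x) <-> ~ oset (phi V) x.
Proof.
  split; [|intros H; apply (lsup_ub (Lopen_ideal_lattice Y HY)), H].
  intros H Hx.
  apply (hom_mono (Lopen_ideal_lattice Y HY) (Lopen_ideal_lattice X HX) phi Hphi _ _ H) in Hx.
  unfold missing_open in Hx. rewrite (proj1 Hphi) in Hx.
  apply oset_lsup in Hx as [U [[V' [HV' ->]] Hx]]. exact (HV' Hx).
Qed.

Lemma missing_closed_sub (C : pt Y -> Prop) (HC : closed Y C) (x : pt X) :
  ~ oset (phi (closed_compl HC)) x -> forall z, ~ oset (missing_open x) z -> C z.
Proof.
  intros Hx z Hz. apply NNPP. intros HCz. apply Hz. apply le_missing_open in Hx. exact (Hx z HCz).
Qed.

Lemma missing_closed_irreducible (x : pt X) :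
  irreducible Y (fun z => ~ oset (missing_open x) z).
Proof.
  intros C1 C2 HC1 HC2 E.
  assert (H12 : ~ oset (phi (@lmul (Lopen Y) (closed_compl HC1) (closed_compl HC2))) x).
  { apply le_missing_open. intros z [H1 H2]. apply NNPP. intros Hz.
    apply E in Hz as [? | ?]; contradiction. }
  rewrite (proj2 (proj2 Hphi)), oset_lmul in H12.
  destruct (classic (oset (phi (closed_compl HC1)) x)) as [Hx1 | Hx1];
    [right | left]; intros z; (split; [| intros Cz; apply E; auto]).
  - apply (missing_closed_sub C2 HC2 x). tauto.
  - apply (missing_closed_sub C1 HC1 x). exact Hx1.
Qed.

Lemma missing_generic_point (x : pt X) :
  exists y, forall z, ~ oset (missing_open x) z <-> closure Y (fun w => w = y) z.
Proof.
  apply (proj2 (proj2 (proj2 (proj2 HY)))).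
  - refine (opn_ext Y (oset (missing_open x)) _ _ (proj2_sig _)).
    intros z. split; [auto | apply NNPP].
  - apply NNPP. intros Hn. apply (proj1 (le_missing_open x (ltop (Lopen Y)))).
    + intros z _. apply NNPP. intros Hz. apply Hn. exists z. exact Hz.
    + rewrite (proj1 (proj2 Hphi)). apply oset_ltop.
  - apply missing_closed_irreducible.
Qed.

Definition point_map (x : pt X) : pt Y :=
  proj1_sig (constructive_indefinite_description _ (missing_generic_point x)).

Lemma point_map_spec (V : opens Y) (x : pt X) : oset V (point_map x) <-> oset (phi V) x.
Proof.
  assert (Hgen := proj2_sig (constructive_indefinite_description _ (missing_generic_point x))).
  fold (point_map x) in Hgen. simpl in Hgen. split.
  - intros Vy. apply NNPP. intros Hn. apply le_missing_open in Hn.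
    refine (proj2 (Hgen (point_map x)) _ (Hn _ Vy)). intros C _ HC. apply HC. reflexivity.
  - intros Hx. apply NNPP. intros Hn. apply (proj1 (le_missing_open x V)); [|exact Hx].
    intros z Vz. apply NNPP. intros Wz. apply Hgen in Wz.
    refine (Wz (fun w => ~ oset V w) _ _ (Vz)); [|intros w ->; exact Hn].
    refine (opn_ext Y (oset V) _ _ (proj2_sig V)). intros w. split; [auto | apply NNPP].
Qed.

Lemma point_map_continuous : continuous X Y point_map.
Proof.
  intros V HV. refine (opn_ext X (oset (phi (exist _ V HV))) _ _ (proj2_sig _)).
  intros x. symmetry. exact (point_map_spec (exist _ V HV) x).
Qed.

Lemma lopen_map_full :
  exists (f : pt X -> pt Y) (Hf : continuous X Y f), forall V, phi V = lopen_map f Hf V.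
Proof.
  exists point_map, point_map_continuous. intros V.
  apply opens_ext. intros x. symmetry. apply point_map_spec.
Qed.

End Fullness.

Lemma le_of_Dset_incl {L : latdata} (HL : ideal_lattice L) (a b : lcar L) :
  semiprime L b -> (forall p, Dset L a p -> Dset L b p) -> lle a b.
Proof.
  intros Hb Hab. apply NNPP. intros Hn.
  destruct (il_algebraic _ HL a) as [B [HB EB]].
  assert (Hc : exists c, B c /\ ~ lle c b).
  { apply NNPP. intros H. apply Hn. rewrite EB. apply (lsup_least HL). intros c Bc.
    apply NNPP. intros Hcb. apply H. exists c. split; assumption. }
  destruct Hc as [c [Bc Hcb]].
  destruct (prime_avoiding_powers HL b c (HB c Bc)) as [p [Hp [Hbp Hcp]]].
  { intros n Hn'. exact (Hcb (semiprime_lpow_le HL b c n Hb Hn')). }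
  apply (Hab (exist _ p Hp)); [|exact Hbp].
  apply (Dset_mono HL c); [rewrite EB; apply (lsup_ub HL), Bc|].
  intros Hc. apply (Hcp 1). rewrite (lpow1 HL). exact Hc.
Qed.

Lemma Lopen_semiprime (X : top) (U : opens X) : semiprime (Lopen X) U.
Proof. intros V HV x Vx. exact (HV x (conj Vx Vx)). Qed.

Lemma semiprime_of_retract {L L' : latdata} (HL : ideal_lattice L) (HL' : ideal_lattice L')
  (phi : lcar L -> lcar L') (psi : lcar L' -> lcar L) :
  is_hom L L' phi -> is_hom L' L psi -> (forall a, psi (phi a) = a) ->
  (forall u, semiprime L' u) -> forall a, semiprime L a.
Proof.
  intros Hphi Hpsi Hret Hsp a b Hb. rewrite <- (Hret b), <- (Hret a).
  apply (hom_mono HL' HL psi Hpsi), Hsp. rewrite <- (proj2 (proj2 Hphi)).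
  apply (hom_mono HL HL' phi Hphi), Hb.
Qed.

Section SemiprimeRepresentation.
Context {L : latdata} (HL : ideal_lattice L) (Hsp : forall a : lcar L, semiprime L a).

Definition Dopen (a : lcar L) : lcar (Lopen (Spec L HL)) := exist _ (Dset L a) (Dset_open a).

Definition Dopen_inv (U : lcar (Lopen (Spec L HL))) : lcar L :=
  lsup (fun a => forall p, Dset L a p -> oset U p).

Lemma Dopen_hom : is_hom L (Lopen (Spec L HL)) Dopen.
Proof. exact (psi_of_hom HL (Spec L HL) (fun p => p) Dset_open). Qed.

Lemma DopenK (a : lcar L) : Dopen_inv (Dopen a) = a.
Proof.
  apply (lle_antisym HL).
  - apply (lsup_least HL). intros b Hb. apply (le_of_Dset_incl HL _ _ (Hsp a)), Hb.
  - apply (lsup_ub HL). auto.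
Qed.

Lemma Dopen_invK (U : lcar (Lopen (Spec L HL))) : Dopen (Dopen_inv U) = U.
Proof.
  apply opens_ext. intros p. simpl. unfold Dopen_inv. rewrite (Dset_lsup HL). split.
  - intros [a [Ha Hap]]. exact (Ha p Hap).
  - intros Up. destruct (proj2_sig U) as [a Ha]. exists a.
    split; [intros q; apply Ha | apply Ha, Up].
Qed.

End SemiprimeRepresentation.

Definition Lopen_representable (L : latdata) : Prop :=
  exists (X : top), spectral X /\
    exists (phi : lcar L -> lcar (Lopen X)) (psi : lcar (Lopen X) -> lcar L),
      is_hom L (Lopen X) phi /\ is_hom (Lopen X) L psi /\
      (forall a, psi (phi a) = a) /\ (forall U, phi (psi U) = U).

Lemma Lopen_representable_iff_semiprime {L : latdata} (HL : ideal_lattice L) :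
  Lopen_representable L <-> forall a : lcar L, semiprime L a.
Proof.
  split.
  - intros [X [HX [phi [psi [Hphi [Hpsi [Hret _]]]]]]].
    exact (semiprime_of_retract HL (Lopen_ideal_lattice X HX) phi psi Hphi Hpsi Hret
             (Lopen_semiprime X)).
  - intros Hsp. exists (Spec L HL). split; [apply spec_spectral|].
    assert (Hret := DopenK HL Hsp). assert (Hsec := Dopen_invK HL).
    exists (Dopen HL), (Dopen_inv HL).
    split; [apply Dopen_hom|]. split; [exact (hom_inverse _ _ (Dopen_hom HL) Hret Hsec)|].
    split; [exact Hret | exact Hsec].
Qed.

Theorem mainTheorem8 :
  (forall (L : latdata) (HL : ideal_lattice L), spectral (Spec L HL)) /\
  (forall X : top, spectral X -> ideal_lattice (Lopen X)) /\
  (forall (L L' : latdata) (HL : ideal_lattice L) (HL' : ideal_lattice L')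
          (psi : lcar L' -> lcar L),
      is_hom L' L psi ->
      exists H : forall p, prime L p -> prime L' (spec_map psi p),
        continuous (Spec L HL) (Spec L' HL')
          (fun p => exist _ (spec_map psi (proj1_sig p)) (H _ (proj2_sig p)))) /\
  (forall (L : latdata), ideal_lattice L ->
      forall p, prime L p -> spec_map (fun a : lcar L => a) p = p) /\
  (forall (L1 L2 L3 : latdata), ideal_lattice L1 -> ideal_lattice L2 -> ideal_lattice L3 ->
      forall (psi1 : lcar L1 -> lcar L2) (psi2 : lcar L2 -> lcar L3),
      is_hom L1 L2 psi1 -> is_hom L2 L3 psi2 ->
      forall p, prime L3 p ->
        spec_map (fun a => psi2 (psi1 a)) p = spec_map psi1 (spec_map psi2 p)) /\
  (forall (X Y : top), spectral X -> spectral Y ->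
      forall (g : pt X -> pt Y) (Hg : continuous X Y g),
        is_hom (Lopen Y) (Lopen X) (lopen_map g Hg)) /\
  (forall (L : latdata) (HL : ideal_lattice L) (X : top), spectral X ->
    (forall phi : lcar L -> lcar (Lopen X), is_hom L (Lopen X) phi ->
       exists H : forall x, prime L (phi_of (fun a => oset (phi a)) x),
         continuous X (Spec L HL) (fun x => exist _ _ (H x))) /\
    (forall f : pt X -> pt (Spec L HL), continuous X (Spec L HL) f ->
       exists H : forall a, opn (psi_of (fun x => proj1_sig (f x)) a),
         is_hom L (Lopen X) (fun a => exist _ _ (H a))) /\
    (forall phi : lcar L -> lcar (Lopen X), is_hom L (Lopen X) phi ->
       forall a, psi_of (phi_of (fun b => oset (phi b))) a = oset (phi a)) /\
    (forall f : pt X -> pt (Spec L HL), continuous X (Spec L HL) f ->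
       forall x, phi_of (psi_of (fun y => proj1_sig (f y))) x = proj1_sig (f x)) /\
    (forall (L' : latdata) (HL' : ideal_lattice L') (psi : lcar L' -> lcar L),
       is_hom L' L psi ->
       forall phi : lcar L -> lcar (Lopen X), is_hom L (Lopen X) phi ->
       forall x, phi_of (fun a' => oset (phi (psi a'))) x
                 = spec_map psi (phi_of (fun a => oset (phi a)) x)) /\
    (forall (Y : top), spectral Y -> forall (g : pt Y -> pt X) (Hg : continuous Y X g),
       forall phi : lcar L -> lcar (Lopen X), is_hom L (Lopen X) phi ->
       forall y, phi_of (fun a => oset (lopen_map g Hg (phi a))) y
                 = phi_of (fun a => oset (phi a)) (g y))) /\
  (forall (X Y : top), spectral X -> spectral Y ->
    (forall (f g : pt X -> pt Y) (Hf : continuous X Y f) (Hg : continuous X Y g),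
       (forall V, lopen_map f Hf V = lopen_map g Hg V) -> forall x, f x = g x) /\
    (forall phi : lcar (Lopen Y) -> lcar (Lopen X), is_hom (Lopen Y) (Lopen X) phi ->
       exists (f : pt X -> pt Y) (Hf : continuous X Y f),
         forall V, phi V = lopen_map f Hf V)) /\
  (forall L : latdata, ideal_lattice L ->
    ((exists (X : top), spectral X /\
        exists (phi : lcar L -> lcar (Lopen X)) (psi : lcar (Lopen X) -> lcar L),
          is_hom L (Lopen X) phi /\ is_hom (Lopen X) L psi /\
          (forall a, psi (phi a) = a) /\ (forall U, phi (psi U) = U))
     <-> (forall a : lcar L, semiprime L a))).
Proof.
  split; [exact @spec_spectral|].
  split; [exact Lopen_ideal_lattice|].
  split; [intros L L' HL HL' psi Hpsi; exists (spec_map_prime HL HL' psi Hpsi);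
          apply spec_map_continuous|].
  split; [intros L HL p _; apply (spec_map_id HL)|].
  split; [intros L1 L2 L3 H1 H2 H3 psi1 psi2 K1 K2 p _;
          apply (spec_map_comp H1 H2 H3); assumption|].
  split; [intros X Y _ _; apply lopen_map_hom|].
  split.
  { intros L HL X HX. split; [|split; [|split; [|split; [|split]]]].
    - intros phi Hphi. exists (phi_of_prime HL X HX phi Hphi).
      apply (phi_of_continuous HL X HX phi Hphi).
    - intros f Hf. exists (psi_of_open HL X f Hf). apply psi_of_hom.
    - intros phi Hphi. apply (psi_of_phi_of HL X HX phi Hphi).
    - intros f _. apply phi_of_psi_of.
    - intros L' HL' psi Hpsi phi Hphi. apply (phi_of_natural HL HL' X HX); assumption.
    - reflexivity. }
  split.
  { intros X Y HX HY. split; [apply lopen_map_faithful, HY | apply lopen_map_full; assumption]. }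
  intros L HL. exact (Lopen_representable_iff_semiprime HL).
Qed.
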